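(* A tree $T$ is compact Hausdorff in the coarse wedge topology if and only if $T$ is chain-complete and has finitely many minimal elements.
   Context: A tree is a partially ordered set in which the set of predecessors of each element is well-ordered. Levels: $T(0)$ is the set of minimal elements; $T(\alpha)$ is the set of minimal elements of $T\setminus\bigcup_{\beta<\alpha}T(\beta)$; an element is on a successor level if it lies in $T(\alpha+1)$ for some $\alpha$. $T$ is chain-complete if every nonempty chain has a supremum (least upper bound) in $T$. For $t\in T$, $V_t=\{s\in T:s\ge t\}$. The coarse wedge topology has subbase all $V_t$ and $T\setminus V_t$ with $t$ minimal or on a successor level. *)

From HB Require Import structures.
From mathcomp Require Import all_boot all_order.
From mathcomp Require Import all_classical all_reals all_analysis.

Set Implicit Arguments.
Unset Strict Implicit.
Unset Printing Implicit Defensive.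

Import Order.TTheory.
Local Open Scope order_scope.
Local Open Scope classical_set_scope.

Section Trees.
Context {d : Order.disp_t} (T : porderType d).

Definition is_tree : Prop :=
  forall t : T,
    (forall x y : T, x < t -> y < t -> x <= y \/ y <= x) /\
    (forall A : set T, A !=set0 -> A `<=` [set s | s < t] ->
       exists2 m, A m & forall a, A a -> m <= a).

Definition tree_minimal (t : T) : Prop := forall s : T, s <= t -> s = t.

(* t lies on a successor level T(alpha+1): its set of predecessors (whose
   order type is the level of t) has a largest element. *)
Definition successor_level (t : T) : Prop :=
  exists2 p : T, p < t & forall s : T, s < t -> s <= p.

Definition wedge (t : T) : set T := [set s | t <= s].

Definition is_chain (A : set T) : Prop :=
  forall x y, A x -> A y -> x <= y \/ y <= x.

Definition is_supremum (A : set T) (s : T) : Prop :=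
  (forall a, A a -> a <= s) /\ (forall u, (forall a, A a -> a <= u) -> s <= u).

Definition chain_complete : Prop :=
  forall A : set T, A !=set0 -> is_chain A -> exists s, is_supremum A s.

End Trees.

Definition coarse_wedge {d : Order.disp_t} (T : porderType d) : Type := T.

(* Index type of the subbase: None (unused, gives the point) or (t, b) where
   (t, true) |-> V_t and (t, false) |-> T \ V_t. *)
Definition cw_index (T : Type) : Type := option (T * bool).

Section CoarseWedge.
Context {d : Order.disp_t} (T : porderType d).

HB.instance Definition _ := Choice.on (coarse_wedge T).
HB.instance Definition _ := Choice.on (cw_index T).
HB.instance Definition _ := isPointed.Build (cw_index T) None.

Definition cw_dom : set (cw_index T) :=
  [set i | exists t b, i = Some (t, b) /\ (tree_minimal t \/ successor_level t)].

Definition cw_sub (i : cw_index T) : set (coarse_wedge T) :=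
  match i with
  | Some (t, true) => wedge t
  | Some (t, false) => ~` wedge t
  | None => setT
  end.

HB.instance Definition _ :=
  @isSubBaseTopological.Build (coarse_wedge T) (cw_index T) cw_dom cw_sub.

End CoarseWedge.

From HB Require Import structures.
From mathcomp Require Import all_boot all_order.
From mathcomp Require Import all_classical all_reals all_analysis.
From mathcomp Require Import finmap.
Set Implicit Arguments.
Unset Strict Implicit.
Unset Printing Implicit Defensive.
Local Open Scope classical_set_scope.
Import Order.TTheory.
Local Open Scope order_scope.

(* A limit node m is the supremum of its predecessors unless some other node
   has exactly the same predecessors.  Such a twin cannot be separated from m,
   since the predecessors of m converge to both, and chain-completeness rules
   twins out as well (the supremum of the predecessors of m must be m).
   Without twins, a <= x fails only if some nonlimit m <= a has ~ m <= x, so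
   the subbasic sets separate points and every wedge V_a is closed.  A cluster
   point of the wedges of a chain then bounds the chain, which yields its
   supremum, and the open cover by the V_m, m minimal, has a finite subcover.
   Conversely, an ultrafilter converges to the supremum of the chain of the
   nonlimit t with V_t in the ultrafilter; finitely many minimal elements make
   this chain nonempty. *)

Lemma ultra_fset_cover (U : Type) (I : choiceType) (F : set_system U)
    (D : {fset I}) (f : I -> set U) :
  UltraFilter F -> \bigcup_(i in [set` D]) f i = setT ->
  exists2 i, i \in D & F (f i).
Proof.
move=> FU cov; apply: contrapT => noF.
have FC : F (\bigcap_(i in [set` D]) ~` f i).
  apply: filter_bigI => i iD.
  by have [Fi|//] := in_ultra_setVsetC (f i) FU; case: noF; exists i.
have [y Cy] := filter_ex FC.
have : (\bigcup_(i in [set` D]) f i) y by rewrite cov.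
by case=> i iD; apply: Cy.
Qed.

Section CoarseWedge.
Context (d : Order.disp_t) (T : porderType d).
Local Notation X := (coarse_wedge T).

Definition nonlimit (t : T) : Prop := tree_minimal t \/ successor_level t.

Definition preds (t : T) : set T := [set s | s < t].

Lemma cw_open (i : cw_index T) : cw_dom i -> open (cw_sub i : set X).
Proof.
move=> Di; exists [set cw_sub i]; last by rewrite bigcup_set1.
by move=> _ ->; apply: finI_from1.
Qed.

Lemma open_wedge (t : T) : nonlimit t -> open (wedge t : set X).
Proof. by move=> nlt; apply: (@cw_open (Some (t, true))); exists t, true. Qed.

Lemma wedge_nbhs (t : T) (x : X) : nonlimit t -> t <= x -> nbhs x (wedge t).
Proof. by move=> nlt tx; apply: open_nbhs_nbhs; split; [exact: open_wedge|]. Qed.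

Lemma wedgeC_nbhs (t : T) (x : X) :
  nonlimit t -> ~ t <= x -> nbhs x (~` wedge t).
Proof.
move=> nlt ntx; apply: open_nbhs_nbhs; split => //.
by apply: (@cw_open (Some (t, false))); exists t, false.
Qed.

Lemma cw_cvg (F : set_system X) (x : X) : Filter F ->
  (forall i, cw_dom i -> cw_sub i x -> F (cw_sub i)) -> F --> x.
Proof.
move=> FF Fsub A; rewrite nbhsE /= => -[_ [[B sB <-] [C BC Cx] sUBA]].
have [D sD DC] := sB _ BC; subst C.
have FD : F (\bigcap_(i in [set` D]) cw_sub i).
  by apply: filter_bigI => i iD; apply: Fsub; [exact/set_mem/sD|apply: Cx].
apply: filterS FD => y Dy; apply: sUBA.
by exists (\bigcap_(i in [set` D]) cw_sub i).
Qed.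

Lemma tree_minimalP (t : T) : tree_minimal t <-> preds t = set0.
Proof.
split=> [tmin|t0 s st].
  rewrite -subset0 => s; rewrite /preds /= => st.
  by move: (st); rewrite (tmin s (ltW st)) ltxx.
case: (eqVneq s t) => // nst.
have : preds t s by rewrite /preds /= lt_neqAle nst st.
by rewrite t0.
Qed.

Lemma not_minimal_preds (t : T) : ~ tree_minimal t -> preds t !=set0.
Proof. by move=> /tree_minimalP nt0; apply/set0P/eqP. Qed.

Lemma nonlimit_preds (s t : T) : preds s = preds t -> nonlimit s -> nonlimit t.
Proof.
move=> e [smin|[p ps hp]]; [left|right].
  by move: smin; rewrite !tree_minimalP e.
have lt_st u : u < s -> u < t by move=> us; have : preds t u by rewrite -e.
have lt_ts u : u < t -> u < s by move=> ut; have : preds s u by rewrite e.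
by exists p => [|u /lt_ts]; [exact: lt_st|exact: hp].
Qed.

Definition limits_are_sups : Prop :=
  forall m x : T, ~ nonlimit m -> ubound (preds m) x -> m <= x.

Hypothesis HT : is_tree T.

Lemma le_total_below (a b x : T) : a <= x -> b <= x -> a <= b \/ b <= a.
Proof.
move=> ax bx.
case: (eqVneq a x) => [->|nax]; first by right.
case: (eqVneq b x) => [->|nbx]; first by left.
by apply: (HT x).1; rewrite lt_neqAle ?nax ?nbx.
Qed.

Lemma bounded_has_min (A : set T) (t : T) : A !=set0 -> ubound A t ->
  exists2 m, A m & lbound A m.
Proof.
move=> [a Aa] At.
have eq_or_lt b : A b -> b = t \/ (A `&` preds t) b.
  move=> Ab; case: (eqVneq b t) => [|nbt]; [left|right] => //.
  by split=> //; rewrite /preds /= lt_neqAle nbt At.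
have [[b Bb]|B0] := pselect ((A `&` preds t) !=set0).
  have [m [Am mt] mmin] := (HT t).2 _ (ex_intro _ b Bb) (fun _ => @proj2 _ _).
  by exists m => // c /eq_or_lt [->|/mmin //]; exact: ltW.
have {}eq_t b : A b -> b = t.
  by move=> /eq_or_lt [//|Bb]; case: B0; exists b.
by exists t => [|c /eq_t ->//]; rewrite -(eq_t a Aa).
Qed.

Lemma exists_minimal_below (t : T) : exists2 m, tree_minimal m & m <= t.
Proof.
have [tmin|/not_minimal_preds t0] := pselect (tree_minimal t); first by exists t.
have [m mt mmin] := (HT t).2 _ t0 (fun _ h => h).
exists m; last exact: ltW.
apply/tree_minimalP; rewrite -subset0 => s /= sm.
by have := mmin s (lt_trans sm mt); rewrite (lt_geF sm).
Qed.

Lemma exists_same_preds (m x : T) : ubound (preds m) x -> ~ x < m ->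
  exists2 y, y <= x & preds y = preds m.
Proof.
move=> mx nxm.
have [y [yx nym] ymin] := bounded_has_min (A := [set y | y <= x /\ ~ y < m])
  (ex_intro _ x (conj (lexx x) nxm)) (fun _ => @proj1 _ _).
exists y => //; apply/seteqP; rewrite /preds; split => s /= sy.
  apply: contrapT => nsm.
  by have := ymin s (conj (le_trans (ltW sy) yx) nsm); rewrite (lt_geF sy).
have [sy'|ys] := le_total_below (mx s sy) yx.
  by rewrite lt_neqAle sy' andbT; apply/eqP => esy; apply: nym; rewrite -esy.
by case: nym; exact: le_lt_trans ys sy.
Qed.

Lemma nonlimit_lub_mem (A : set T) (x : T) : A !=set0 -> ubound A x ->
  (forall y, y < x -> ~ ubound A y) -> nonlimit x -> A x.
Proof.
move=> [a Aa] Ax least [xmin|[p px hp]]; first by rewrite -(xmin a (Ax a Aa)).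
apply: contrapT => nAx; apply: (least p px) => b Ab; apply: hp.
by rewrite lt_neqAle Ax // andbT; apply/eqP => ebx; apply: nAx; rewrite -ebx.
Qed.

Lemma chain_complete_limits_are_sups : chain_complete T -> limits_are_sups.
Proof.
move=> cc m x nlm mx.
have m0 : preds m !=set0 by apply: not_minimal_preds => mmin; apply: nlm; left.
have [u [pu ulub]] := cc _ m0 (HT m).1.
suff <- : u = m by exact: ulub.
apply: contrapT => num; apply: nlm; right; exists u => //.
by rewrite lt_neqAle; apply/andP; split; [apply/eqP|apply: ulub => s /ltW].
Qed.

Section LimitsAreSups.
Hypothesis sups : limits_are_sups.

Lemma le_of_nonlimit_le (a x : T) :
  (forall m, nonlimit m -> m <= a -> m <= x) -> a <= x.
Proof.
move=> H; apply: contrapT => nax.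
have [m [ma nmx] mmin] := bounded_has_min (A := [set y | y <= a /\ ~ y <= x])
  (ex_intro _ a (conj (lexx a) nax)) (fun _ => @proj1 _ _).
apply: nmx; have [nlm|lm] := pselect (nonlimit m); first exact: H.
apply: sups lm _ => s sm; apply: contrapT => nsx.
by have := mmin s (conj (le_trans (ltW sm) ma) nsx); rewrite (lt_geF sm).
Qed.

Lemma ubounded_sup (A : set T) (x : T) : A !=set0 -> ubound A x ->
  exists s, is_supremum A s.
Proof.
move=> A0 Ax.
have [s [sx As] smin] := bounded_has_min (A := [set y | y <= x /\ ubound A y])
  (ex_intro _ x (conj (lexx x) Ax)) (fun _ => @proj1 _ _).
have least y : y < s -> ~ ubound A y.
  move=> ys Ay; have := smin y (conj (le_trans (ltW ys) sx) Ay).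
  by rewrite (lt_geF ys).
exists s; split => // u Au.
have [nls|ls] := pselect (nonlimit s).
  exact/Au/(nonlimit_lub_mem A0 As least).
apply: sups ls _ => y ys.
have /existsNP [b /not_implyP [Ab nby]] := least y ys.
have [//|yb] := le_total_below (As b Ab) (ltW ys).
exact: le_trans yb (Au b Ab).
Qed.

Lemma closed_wedge (a : T) : closed (wedge a : set X).
Proof.
move=> x clx; apply: le_of_nonlimit_le => m nlm ma; apply: contrapT => nmx.
have [y [ay nmy]] := clx _ (wedgeC_nbhs nlm nmx).
exact/nmy/(le_trans ma ay).
Qed.

Lemma limits_are_sups_hausdorff : hausdorff_space X.
Proof.
have le_of_cluster (p q : X) : cluster (nbhs p) q -> p <= q.
  move=> cl; apply: le_of_nonlimit_le => m nlm mp; apply: closed_wedge.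
  by move=> B qB; exact: cl _ _ (wedge_nbhs nlm mp) qB.
move=> p q cl; apply/le_anti/andP; split; apply: le_of_cluster => //.
by move: cl; rewrite /cluster /= meetsC.
Qed.

Lemma compact_chain_complete : compact [set: X] -> chain_complete T.
Proof.
move=> cX A [a Aa] Ach.
pose F := filter_from A (fun a => wedge a : set X).
have FF : ProperFilter F.
  apply: filter_from_proper => [|b _]; last by exists b; rewrite /wedge /=.
  apply: filter_from_filter; first by exists a.
  move=> b c Ab Ac; have [bc|cb] := Ach b c Ab Ac; [exists c|exists b] => // y ?.
    by split=> //; exact: le_trans bc _.
  by split=> //; exact: le_trans cb _.
have [x [_ clx]] := cX F FF filterT.
apply: (@ubounded_sup _ x); first by exists a.
by move=> b Ab; apply: closed_wedge => B xB; apply: clx xB; exists b.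
Qed.

End LimitsAreSups.

Definition preds_filter (t : T) : set_system X :=
  filter_from (preds t) (fun s => wedge s `&` preds t).

Lemma preds_filter_proper (t : T) :
  ~ tree_minimal t -> ProperFilter (preds_filter t).
Proof.
move/not_minimal_preds => t0.
apply: filter_from_proper => [|s st]; last by exists s; split; rewrite /wedge /=.
apply: filter_from_filter => // a b at0 bt.
have [ab|ba] := (HT t).1 a b at0 bt; [exists b|exists a] => // y [ya yt].
  by do !split=> //; exact: le_trans ab ya.
by do !split=> //; exact: le_trans ba ya.
Qed.

Lemma preds_filter_cvg (t : T) : ~ nonlimit t -> preds_filter t --> (t : X).
Proof.
move=> nlt; have t0 : ~ tree_minimal t by move=> tmin; apply: nlt; left.
apply: (cw_cvg (preds_filter_proper t0)) => _ [u [[] [-> nlu]]] /= ut.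
  have {}ut : u < t.
    by rewrite lt_neqAle ut andbT; apply/eqP => eut; apply: nlt; rewrite -eut.
  by exists u => // y [].
have [s st] := not_minimal_preds t0.
by exists s => // y [_ yt] uy; apply: ut; exact: le_trans uy (ltW yt).
Qed.

Lemma hausdorff_limits_are_sups : hausdorff_space X -> limits_are_sups.
Proof.
move=> hX m x nlm mx; apply: contrapT => nmx.
have nxm : ~ x < m by move=> xm; apply: nlm; right; exists x.
have [y yx ym] := exists_same_preds mx nxm.
have nly : ~ nonlimit y by move/(nonlimit_preds ym).
have m0 : ~ tree_minimal m by move=> mmin; apply: nlm; left.
have my : m = y.
  apply: (cvg_unique hX (FF := preds_filter_proper m0)) (preds_filter_cvg nlm) _.
  by have := preds_filter_cvg nly; rewrite /preds_filter ym.
by apply: nmx; rewrite my.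
Qed.

Lemma compact_finite_minimal : compact [set: X] ->
  finite_set [set t : T | tree_minimal t].
Proof.
move=> cX; apply: contrapT => infM.
pose avoid (S : {fset T}) : set X := [set y | forall m, m \in S -> ~ m <= y].
pose F := filter_from [set: {fset T}] avoid.
have FF : ProperFilter F.
  apply: filter_from_proper => [|S _].
    apply: filter_from_filter => [|S S' _ _]; first by exists fset0.
    exists (S `|` S')%fset => // y Sy.
    by split=> m mS; apply: Sy; rewrite in_fsetU mS ?orbT.
  have /existsNP [m /not_implyP [mmin mS]] :
      ~ [set t | tree_minimal t] `<=` [set` S].
    by move=> sS; apply: infM; exact: finite_subfset sS.
  by exists m => m' m'S /mmin m'm; apply: mS; rewrite -m'm.
have [x [_ clx]] := cX F FF filterT.
have [m mmin mx] := exists_minimal_below x.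
have Fm : F (avoid [fset m]%fset) by exists [fset m]%fset.
have [y [avy my]] := clx _ _ Fm (wedge_nbhs (or_introl mmin) mx).
by apply: (avy m); rewrite ?inE.
Qed.

Lemma chain_complete_compact : chain_complete T ->
  finite_set [set t : T | tree_minimal t] -> compact [set: X].
Proof.
move=> cc /finite_fsetP[M eM]; rewrite compact_ultra => F UF _.
pose C := [set t | nonlimit t /\ F (wedge t)].
have [m Mm Fm] : exists2 m, m \in M & F (wedge m : set X).
  apply: ultra_fset_cover; rewrite -subTset => y _.
  by have [m mmin my] := exists_minimal_below y; exists m; rewrite // -eM.
have C0 : C !=set0.
  by exists m; split => //; left; have : [set` M] m := Mm; rewrite -eM.
have Cch : is_chain C.
  move=> s t [_ Fs] [_ Ft]; have [y [sy ty]] := filter_ex (filterI Fs Ft).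
  exact: le_total_below sy ty.
have [x [Cx xlub]] := cc C C0 Cch.
exists x; split => //; apply: cw_cvg => _ [t [[] [-> nlt]]] /= tx.
  have [[c Cc tc]|noc] := pselect (exists2 c, C c & t <= c).
    by apply: filterS Cc.2 => y; exact: le_trans tc.
  have Ct : ubound C t.
    move=> c Cc; have [//|tc] := le_total_below (Cx c Cc) tx.
    by case: noc; exists c.
  have xt : x = t by apply: le_anti; rewrite tx (xlub t Ct).
  suff [] : C x by rewrite xt.
  apply: nonlimit_lub_mem C0 Cx _ _; last by rewrite xt.
  by move=> y yx Cy; have := xlub y Cy; rewrite (lt_geF yx).
have [Ft|//] := in_ultra_setVsetC (wedge t : set X) UF.
by case: tx; apply: Cx.
Qed.

End CoarseWedge.

Theorem corollary3p5 (d : Order.disp_t) (T : porderType d) (HT : is_tree T) :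
  (compact [set: coarse_wedge T] /\ hausdorff_space (coarse_wedge T)) <->
  (chain_complete T /\ finite_set [set t : T | tree_minimal t]).
Proof.
split=> [[cX hX]|[cc fin]].
  have sups := hausdorff_limits_are_sups HT hX.
  split; first exact: compact_chain_complete sups cX.
  exact: compact_finite_minimal HT cX.
split; first exact: chain_complete_compact.
exact/limits_are_sups_hausdorff/chain_complete_limits_are_sups.
Qed.
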